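(* Let $X,Y$ be non-empty subsets of $A^+$. (i) If $X$ is a prefix code, $Y$ is a suffix code and $XY$ is a code, then $(X,Y)$ is a strong alternative code. (ii) If $(X,Y)$ is a strong alternative code, then $X$ is a prefix code and $Y$ is a suffix code.
   Context: $A$ is a finite alphabet, $A^*$ the set of words, $A^+$ the non-empty words, $XY=\{xy:x\in X,y\in Y\}$. For $X,Z\subseteq A^*$: $X^{-1}Z=\{u\in A^*: xu\in Z \text{ for some } x\in X\}$ and $ZY^{-1}=\{u\in A^*: uy\in Z\text{ for some } y\in Y\}$. A code is a subset of $A^+$ in which every word has at most one factorization into its elements. A prefix (suffix) code is a subset of $A^+$ in which no word is a proper prefix (suffix) of another. For non-empty $X,Y\subseteq A^+$, $(X,Y)$ is an alternative code if no word of $A^+$ admits two different similar alternative factorizations on $(X,Y)$ (factorizations $u_1\cdots u_n$, $n\ge2$, $u_i\in X\cup Y$, alternating between $X$ and $Y$; similar = beginning in the same set and ending in the same set); equivalently, $XY$ is a code and each element of $XY$ has exactly one factorization $xy$ with $x\in X,y\in Y$. An alternative code $(X,Y)$ is a strong alternative code if $X^{-1}(XY)\subseteq Y$ and $(XY)Y^{-1}\subseteq X$. *)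

From mathcomp Require Import all_boot.
Set Implicit Arguments. Unset Strict Implicit. Unset Printing Implicit Defensive.

Section Words.
Variable A : finType.
Definition lang := seq A -> Prop.

Definition in_Aplus (X : lang) : Prop := forall w, X w -> w <> [::].

Definition catl (X Y : lang) : lang :=
  fun w => exists x y, [/\ X x, Y y & w = x ++ y].

Definition lquot (X Z : lang) : lang := fun u => exists x, X x /\ Z (x ++ u).
Definition rquot (Z Y : lang) : lang := fun u => exists y, Y y /\ Z (u ++ y).

Definition subl (X Y : lang) : Prop := forall w, X w -> Y w.

Definition is_code (X : lang) : Prop :=
  in_Aplus X /\
  forall s1 s2 : seq (seq A),
    (forall w, w \in s1 -> X w) -> (forall w, w \in s2 -> X w) ->
    flatten s1 = flatten s2 -> s1 = s2.

Definition is_prefix_code (X : lang) : Prop :=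
  in_Aplus X /\ forall x y t, X x -> X y -> y = x ++ t -> t = [::].

Definition is_suffix_code (X : lang) : Prop :=
  in_Aplus X /\ forall x y t, X x -> X y -> y = t ++ x -> t = [::].

Fixpoint alt (X Y : lang) (b : bool) (s : seq (seq A)) : Prop :=
  match s with
  | [::] => True
  | u :: s' => (if b then X u else Y u) /\ alt X Y (~~ b) s'
  end.

(* (X,Y) alternative code: X, Y non-empty subsets of A^+ and no word admits
   two different similar alternative factorizations (n >= 2, same starting
   set b, same ending set, i.e. same parity of length given same start). *)
Definition alt_code (X Y : lang) : Prop :=
  [/\ (exists x, X x), (exists y, Y y), in_Aplus X, in_Aplus Y &
   forall (b : bool) (s1 s2 : seq (seq A)),
     alt X Y b s1 -> alt X Y b s2 ->
     2 <= size s1 -> 2 <= size s2 ->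
     odd (size s1) = odd (size s2) ->
     flatten s1 = flatten s2 -> s1 = s2].

Definition strong_alt_code (X Y : lang) : Prop :=
  [/\ alt_code X Y, subl (lquot X (catl X Y)) Y & subl (rquot (catl X Y) Y) X].
End Words.

(* For (i), pad an alternating factorization with a fixed x0 in front and/or a
   fixed y0 at the back so that it starts in X and has even length; it then
   groups into a factorization over XY, which is unique because XY is a code,
   and the prefix property of X splits each factor xy back uniquely.
   For (ii), if x and xt are both in X then t y0 lies in X^{-1}(XY), hence in
   Y, and x(t y0) = (xt)y0 are two similar alternative factorizations, so t is
   empty; the suffix case is symmetric. *)
From mathcomp Require Import all_boot.
Set Implicit Arguments. Unset Strict Implicit.

Section AlternativeCodes.
Variable A : finType.
Implicit Types (X Y : lang A) (a b c d t : seq A) (s : seq (seq A)).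

Lemma eq_cat_split a b c d : a ++ b = c ++ d ->
  (exists t, c = a ++ t /\ b = t ++ d) \/ (exists t, a = c ++ t /\ d = t ++ b).
Proof.
elim: a c => [|x a IH] [|y c] /=.
- by move=> ->; left; exists [::].
- by move=> ->; left; exists (y :: c).
- by move=> <-; right; exists (x :: a).
- by case=> <- /IH [[t [-> ->]]|[t [-> ->]]]; [left|right]; exists t.
Qed.

Lemma cat_nilr a t : a ++ t = a -> t = [::].
Proof.
by move/(congr1 size)/eqP; rewrite size_cat -{2}[size a]addn0 eqn_add2l size_eq0 => /eqP.
Qed.

Lemma prefix_code_cat_inj X a b c d : is_prefix_code X -> X a -> X c ->
  a ++ b = c ++ d -> a = c /\ b = d.
Proof.
move=> [_ pX] Xa Xc /eq_cat_split [[t [Ec Eb]]|[t [Ea Ed]]].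
- have t0 := pX _ _ _ Xa Xc Ec.
  by move: Ec Eb; rewrite t0 cats0 => -> ->.
- have t0 := pX _ _ _ Xc Xa Ea.
  by move: Ea Ed; rewrite t0 cats0 => -> ->.
Qed.

Lemma suffix_code_cat_inj Y a b c d : is_suffix_code Y -> Y b -> Y d ->
  a ++ b = c ++ d -> a = c /\ b = d.
Proof.
move=> [_ sY] Yb Yd /eq_cat_split [[t [Ec Eb]]|[t [Ea Ed]]].
- have t0 := sY _ _ _ Yd Yb Eb.
  by move: Ec Eb; rewrite t0 cats0 => -> ->.
- have t0 := sY _ _ _ Yb Yd Ed.
  by move: Ea Ed; rewrite t0 cats0 => -> ->.
Qed.

Fixpoint pair_cat s : seq (seq A) :=
  if s is u :: v :: r then (u ++ v) :: pair_cat r else s.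

Lemma flatten_pair_cat s : flatten (pair_cat s) = flatten s.
Proof.
have [n] := ubnP (size s); elim: n s => // n IHn [|u [|v r]] //= /ltnSE size_r.
by rewrite IHn ?catA // ltnW.
Qed.

Section EvenFactorizations.
Variables X Y : lang A.

Lemma pair_cat_catl s : alt X Y true s -> ~~ odd (size s) ->
  forall w, w \in pair_cat s -> catl X Y w.
Proof.
have [n] := ubnP (size s); elim: n s => // n IHn [|u [|v r]] //= /ltnSE size_r.
move=> [Xu [Yv altr]]; rewrite negbK => evr w; rewrite in_cons => /orP [/eqP ->|wr].
- by exists u, v.
- by apply: (IHn r) => //; apply: ltnW.
Qed.

Lemma pair_cat_inj s1 s2 : is_prefix_code X ->
  alt X Y true s1 -> alt X Y true s2 -> ~~ odd (size s1) -> ~~ odd (size s2) ->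
  pair_cat s1 = pair_cat s2 -> s1 = s2.
Proof.
move=> pX; have [n] := ubnP (size s1); elim: n s1 s2 => // n IHn.
move=> [|a [|b r]] [|c [|d r']] //= /ltnSE size_r [Xa [_ altr]] [Xc [_ altr']].
rewrite !negbK => evr evr' [Eabcd Er].
have [-> ->] := prefix_code_cat_inj pX Xa Xc Eabcd.
by rewrite (IHn r r') // ltnW.
Qed.

Lemma alt_even_uniq s1 s2 : is_prefix_code X -> is_code (catl X Y) ->
  alt X Y true s1 -> alt X Y true s2 -> ~~ odd (size s1) -> ~~ odd (size s2) ->
  flatten s1 = flatten s2 -> s1 = s2.
Proof.
move=> pX [_ codeXY] alt1 alt2 ev1 ev2 E.
apply: pair_cat_inj => //; apply: codeXY.
- exact: pair_cat_catl alt1 ev1.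
- exact: pair_cat_catl alt2 ev2.
- by rewrite !flatten_pair_cat.
Qed.

Lemma alt_rcons (b : bool) s u : alt X Y b s ->
  (if b (+) odd (size s) then X u else Y u) -> alt X Y b (rcons s u).
Proof.
elim: s b => [|v s IHs] b /=; first by rewrite addbF.
by rewrite addbN -addNb => -[Xv alts] Xu; split; last exact: IHs.
Qed.

Lemma alt_uniq x0 y0 (b : bool) s1 s2 : is_prefix_code X -> is_code (catl X Y) ->
  X x0 -> Y y0 -> alt X Y b s1 -> alt X Y b s2 ->
  odd (size s1) = odd (size s2) -> flatten s1 = flatten s2 -> s1 = s2.
Proof.
move=> pX codeXY Xx0 Yy0.
have true_uniq s3 s4 : alt X Y true s3 -> alt X Y true s4 ->
    odd (size s3) = odd (size s4) -> flatten s3 = flatten s4 -> s3 = s4.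
  move=> alt3 alt4 Es E; case odd3: (odd (size s3)) Es => Es.
  - apply: rcons_injl (y0) _ _ _; apply: alt_even_uniq => //.
    + by apply: alt_rcons; rewrite ?odd3.
    + by apply: alt_rcons; rewrite -?Es ?odd3.
    + by rewrite size_rcons /= odd3.
    + by rewrite size_rcons /= -Es.
    + by rewrite !flatten_rcons E.
  - by apply: alt_even_uniq; rewrite -?Es ?odd3.
case: b => [|alt1 alt2 Es E]; first exact: true_uniq.
have := true_uniq (x0 :: s1) (x0 :: s2) (conj Xx0 alt1) (conj Xx0 alt2).
by rewrite /= Es E => /(_ erefl erefl) [].
Qed.

End EvenFactorizations.

Lemma prefix_suffix_strong_alt_code X Y : (exists x, X x) -> (exists y, Y y) ->
  is_prefix_code X -> is_suffix_code Y -> is_code (catl X Y) ->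
  strong_alt_code X Y.
Proof.
move=> [x0 Xx0] [y0 Yy0] pX sY codeXY; split.
- split; [by exists x0 | by exists y0 | by case: pX | by case: sY |].
  by move=> b s1 s2 alt1 alt2 _ _; apply: (alt_uniq pX codeXY Xx0 Yy0 alt1 alt2).
- move=> u [x [Xx [x' [y' [Xx' Yy' E]]]]].
  by have [_ ->] := prefix_code_cat_inj pX Xx Xx' E.
- move=> u [y [Yy [x' [y' [Xx' Yy' E]]]]].
  by have [-> _] := suffix_code_cat_inj sY Yy Yy' E.
Qed.

Lemma strong_alt_code_prefix X Y : strong_alt_code X Y -> is_prefix_code X.
Proof.
move=> [[_ [y0 Yy0] Xplus _ uniqXY] lqXY _]; split=> // x y t Xx Xy Ey.
have Yty0 : Y (t ++ y0).
  by apply: lqXY; exists x; split=> //; exists y, y0; split=> //; rewrite Ey catA.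
have := uniqXY true [:: x; t ++ y0] [:: y; y0] (conj Xx (conj Yty0 I))
  (conj Xy (conj Yy0 I)) isT isT erefl.
by rewrite /= !cats0 Ey catA => /(_ erefl) [/esym/cat_nilr].
Qed.

Lemma strong_alt_code_suffix X Y : strong_alt_code X Y -> is_suffix_code Y.
Proof.
move=> [[[x0 Xx0] _ _ Yplus uniqXY] _ rqXY]; split=> // y x t Yy Yx Ex.
have Xx0t : X (x0 ++ t).
  by apply: rqXY; exists y; split=> //; exists x0, x; split=> //; rewrite Ex catA.
have := uniqXY true [:: x0 ++ t; y] [:: x0; x] (conj Xx0t (conj Yy I))
  (conj Xx0 (conj Yx I)) isT isT erefl.
by rewrite /= !cats0 Ex catA => /(_ erefl) [/cat_nilr].
Qed.

End AlternativeCodes.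

Theorem propositionP (A : finType) (X Y : lang A) :
  (exists x, X x) -> (exists y, Y y) -> in_Aplus X -> in_Aplus Y ->
  (is_prefix_code X -> is_suffix_code Y -> is_code (catl X Y) ->
     strong_alt_code X Y) /\
  (strong_alt_code X Y -> is_prefix_code X /\ is_suffix_code Y).
Proof.
move=> exX exY _ _; split; first exact: prefix_suffix_strong_alt_code.
by move=> sac; split;
  [exact: strong_alt_code_prefix sac | exact: strong_alt_code_suffix sac].
Qed.
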